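(* Let $n \ge 2$ be even. Then for every $N$ with $1 \le N \le \frac{3n}{2}$, there exists a finite sequence of $n$-crossing permutations over $S_{3n/2}$ whose product sends $1$ to $N$.
   Context: For integers $2\le n\le m$ and $1 \le j \le m-n+1$, the $n$-crossing permutation $\pi_j\in S_m$ is $\pi_j=(j,\,j+n-1)(j+1,\,j+n-2)\cdots$, i.e. the involution sending $i \mapsto 2j+n-1-i$ for $j\le i\le j+n-1$ and fixing all other elements of $\{1,\dots,m\}$. The $n$-crossing permutations over $S_m$ are $\pi_1,\dots,\pi_{m-n+1}$. *)

From mathcomp Require Import all_boot.
Set Implicit Arguments. Unset Strict Implicit. Unset Printing Implicit Defensive.

(* For 1 <= j <= m-n+1 it maps {1..m} onto itself and
   agrees with pi_j in S_m there. *)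
Definition crossing (n j : nat) (i : nat) : nat :=
  if (j <= i) && (i <= j + n - 1) then (2 * j + n - 1) - i else i.

Definition crossing_prod (n : nat) (s : seq nat) : nat -> nat :=
  foldr (fun j f => crossing n j \o f) id s.

Definition crossing_index (m n j : nat) : bool := (1 <= j) && (j <= m - n + 1).

From mathcomp Require Import all_boot.
From mathcomp Require Import zify.

(* Write n = 2k, so the admissible indices are 1 <= j <= k+1. The crossing
   pi_1 sends 1 to 2k; from 2k, pi_j reaches the odd value 2j-1, and pi_(k+1)
   reaches 2k+1, from which pi_j (j >= 2) reaches the even value 2j-2. This
   covers 1..2k+1, and pi_(k+1) mirrors k+1..2k onto the remaining 2k+1..3k. *)

Definition crossing_reachable (m n x : nat) : Prop :=
  exists s : seq nat, all (crossing_index m n) s /\ crossing_prod n s 1 = x.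

Lemma crossingE n j i :
  j <= i <= j + n - 1 -> crossing n j i = 2 * j + n - 1 - i.
Proof. by rewrite /crossing => ->. Qed.

Lemma crossing_reachable1 m n : crossing_reachable m n 1.
Proof. by exists [::]. Qed.

Lemma crossing_reachableS {m n j x y} :
  crossing_index m n j -> crossing_reachable m n x -> crossing n j x = y ->
  crossing_reachable m n y.
Proof. by move=> hj [s [hs <-]] <-; exists (j :: s); rewrite /= hj hs. Qed.

Section HalfCrossings.

Variable k : nat.
Hypothesis k_gt0 : 0 < k.

Local Notation reachable := (crossing_reachable (3 * k) (2 * k)).

Lemma crossing_index_half j : 1 <= j <= k.+1 -> crossing_index (3 * k) (2 * k) j.
Proof. by rewrite /crossing_index; lia. Qed.

Lemma reachable_2k : reachable (2 * k).
Proof.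
apply: (crossing_reachableS (j := 1) (x := 1)) (crossing_reachable1 _ _) _.
  exact: crossing_index_half.
by rewrite crossingE; lia.
Qed.

Lemma reachable_odd j : 1 <= j <= k.+1 -> reachable (2 * j - 1).
Proof.
move=> hj; apply: crossing_reachableS (crossing_index_half j hj) reachable_2k _.
by rewrite crossingE; lia.
Qed.

Lemma reachable_2k1 : reachable (2 * k + 1).
Proof.
rewrite (_ : 2 * k + 1 = 2 * k.+1 - 1); last by lia.
by apply: reachable_odd; lia.
Qed.

Lemma reachable_even j : 2 <= j <= k.+1 -> reachable (2 * j - 2).
Proof.
move=> hj; apply: crossing_reachableS (crossing_index_half j _) reachable_2k1 _.
  by lia.
by rewrite crossingE; lia.
Qed.

Lemma reachable_small x : 1 <= x <= 2 * k + 1 -> reachable x.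
Proof.
move=> hx; have := odd_double_half x; rewrite -mul2n.
case: (odd x) => /= hx2.
- rewrite (_ : x = 2 * (x./2 + 1) - 1); last by lia.
  by apply: reachable_odd; lia.
- rewrite (_ : x = 2 * (x./2 + 1) - 2); last by lia.
  by apply: reachable_even; lia.
Qed.

Lemma reachable_large x : 2 * k + 1 < x <= 3 * k -> reachable x.
Proof.
move=> hx; apply: (crossing_reachableS (j := k.+1) (x := 4 * k + 1 - x)).
- by apply: crossing_index_half; lia.
- by apply: reachable_small; lia.
- by rewrite crossingE; lia.
Qed.

End HalfCrossings.

Theorem lemma2p3 (n : nat) (hn : 2 <= n) (hev : ~~ odd n) (N : nat)
  (hN : 1 <= N <= 3 * n./2) :
  exists s : seq nat, all (crossing_index (3 * n./2) n) s /\ crossing_prod n s 1 = N.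
Proof.
have [k n_double] : exists k, n = 2 * k.
  by exists n./2; rewrite mul2n -[LHS]odd_double_half (negbTE hev).
subst n; rewrite (_ : (2 * k)./2 = k) in hN *; last by rewrite mul2n doubleK.
have k_gt0 : 0 < k by lia.
change (crossing_reachable (3 * k) (2 * k) N).
have [N_small | N_large] := leqP N (2 * k + 1).
- by apply: reachable_small; lia.
- by apply: reachable_large; lia.
Qed.
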